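(* Let $t\ge 1$ be an integer, $\alpha>0$, and let $\mathcal{P}$ be a non-empty $\alpha$-rich collection of paths of length $2t-2$ (i.e. with $2t-1$ vertices) in a graph $G$. If $\alpha\ge t^2$, then $G$ contains a copy of $F_{t,t}$.
   Context: For $\alpha>0$ and $k\in\mathbb{N}$, a collection $\mathcal{P}$ of labelled paths $x_1x_2\cdots x_k$ (with distinct vertices) in $G$ is $\alpha$-rich if for every $x_1x_2\cdots x_k\in\mathcal{P}$ and every $2\le i\le k-1$ there exist at least $\alpha$ distinct vertices $x_i'$ such that $x_1\cdots x_{i-1}x_i'x_{i+1}\cdots x_k\in\mathcal{P}$. The grid $F_{t,t}$ has vertex set $[t]\times[t]$, two vertices being adjacent iff they differ in exactly one coordinate and there by exactly one. *)

From mathcomp Require Import all_boot all_order all_algebra.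
Set Implicit Arguments. Unset Strict Implicit. Unset Printing Implicit Defensive.
Import Order.TTheory GRing.Theory Num.Theory.

Definition simple_graph (V : finType) (e : rel V) : Prop :=
  symmetric e /\ irreflexive e.

Definition is_path (V : finType) (e : rel V) (k : nat) (p : {ffun 'I_k -> V}) : bool :=
  injectiveb p &&
  [forall i : 'I_k, forall j : 'I_k, (val j == (val i).+1) ==> e (p i) (p j)].

Definition replace_at (V : finType) (k : nat) (p : {ffun 'I_k -> V}) (i : 'I_k) (y : V)
  : {ffun 'I_k -> V} := [ffun j => if j == i then y else p j].

(* P is an alpha-rich collection of paths on k vertices: every member is a path,
   and for every member and every interior position (1-indexed 2..k-1, i.e.
   0-indexed 1..k-2) there are at least alpha vertices y such that replacing
   that vertex by y gives a member of P. *)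
Definition alpha_rich (R : realFieldType) (V : finType) (e : rel V) (k : nat)
  (P : {set {ffun 'I_k -> V}}) (alpha : R) : Prop :=
  (forall p, p \in P -> is_path e p) /\
  (forall p, p \in P -> forall i : 'I_k, (1 <= val i)%N -> ((val i).+2 <= k)%N ->
     alpha <= (#|[set y : V | replace_at p i y \in P]|)%:R)%R.

Definition grid_adj (t : nat) (a b : 'I_t * 'I_t) : bool :=
  ((a.1 == b.1) && (((val a.2).+1 == val b.2) || ((val b.2).+1 == val a.2))) ||
  ((a.2 == b.2) && (((val a.1).+1 == val b.1) || ((val b.1).+1 == val a.1))).

Definition contains_grid (V : finType) (e : rel V) (t : nat) : Prop :=
  exists f : 'I_t * 'I_t -> V,
    injective f /\ forall a b, grid_adj a b -> e (f a) (f b).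

From mathcomp Require Import all_boot all_order all_algebra.
From mathcomp Require Import zify.
Import Order.TTheory GRing.Theory Num.Theory.
Set Implicit Arguments. Unset Strict Implicit.

(* Write t = n + 1 and index the 2n + 1 vertices of a path of P
   by the anti-diagonals of the grid [0, n]^2: the cell (a, b) lies on
   diagonal  diag (a, b) = b + n - a.  A staircase rho picks one cell
   pt rho k = (rho k, k + rho k - n) on every diagonal k, consecutive cells
   being grid-adjacent; the cells on or below the staircase form a region.
   We maintain an injective, edge-preserving map g from that region into G
   whose restriction to the staircase is a path of P.
   - Start: the staircase running along row 0 and column 0, with g read off
     any path Q of P.
   - Step: while the region is not the whole grid, its complement has a
     cell v of minimal a + b; v sits at an outer corner of the staircase,
     and flipping the staircase over v adds exactly v to the region.  The
     only old neighbours of v are the staircase cells on the two adjacent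
     diagonals, so alpha-richness at position diag v (alpha >= t^2 exceeds
     the size of the region) yields a fresh vertex y completing both the
     extended embedding and the new staircase path.
   After at most t^2 steps the region is the whole grid: a copy of F_{t,t}. *)

Section Embedding.
Variables (U W : finType) (adj : rel U) (e : rel W).

Definition embeds (D : {pred U}) (g : U -> W) : Prop :=
  {in D &, injective g} /\ {in D &, forall u w, adj u w -> e (g u) (g w)}.

Lemma embeds_eq (D D' : {pred U}) g : D =i D' -> embeds D g -> embeds D' g.
Proof.
move=> eqD [g_inj g_adj]; split.
- by move=> u w; rewrite -!eqD; apply: g_inj.
- by move=> u w; rewrite -!eqD; apply: g_adj.
Qed.

Lemma embeds_total (D : {pred U}) g : (forall u, u \in D) -> embeds D g ->
  injective g /\ forall u w, adj u w -> e (g u) (g w).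
Proof.
move=> allD [g_inj g_adj].
by split=> u w; [apply: g_inj | apply: g_adj]; apply: allD.
Qed.

Hypotheses (adj_sym : symmetric adj) (adj_irr : irreflexive adj).
Hypothesis e_sym : symmetric e.

Lemma embeds_extend (D : {pred U}) g v y :
  embeds D g -> v \notin D -> y \notin [set g u | u in D] ->
  (forall u, u \in D -> adj v u -> e y (g u)) ->
  embeds (predU1 v D) (fun u => if u == v then y else g u).
Proof.
move=> [g_inj g_adj] vD y_fresh y_adj.
have g_ne_y u : u \in D -> g u != y.
  by move=> uD; apply: contraNneq y_fresh => <-; apply: imset_f.
split=> u w; rewrite !inE.
- case: (eqVneq u v) => [-> | /negbTE uv] /= uD;
    case: (eqVneq w v) => [-> | /negbTE wv] //= wD.
  + by move=> /esym/eqP; rewrite (negbTE (g_ne_y _ wD)).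
  + by move=> /eqP; rewrite (negbTE (g_ne_y _ uD)).
  + exact: g_inj.
- case: (eqVneq u v) => [-> | /negbTE uv] /= uD;
    case: (eqVneq w v) => [-> | /negbTE wv] //= wD.
  + by rewrite adj_irr.
  + exact: y_adj.
  + by rewrite adj_sym e_sym; apply: y_adj.
  + exact: g_adj.
Qed.

End Embedding.

Lemma fresh_image (T U : finType) (f : T -> U) (A : {pred T}) (S : {set U}) :
  #|A| < #|S| -> exists2 y, y \in S & y \notin [set f x | x in A].
Proof.
move=> ltAS; apply/subsetPn; apply: contraTN ltAS => /subset_leq_card leS.
by rewrite -leqNgt (leq_trans leS) ?leq_imset_card.
Qed.

Section Staircase.
Variable n : nat.
Local Notation N := (2 * n.+1 - 1).
Local Notation G := ('I_n.+1 * 'I_n.+1)%type.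

Lemma grid_val_inj (u v : G) : u.1 = v.1 :> nat -> u.2 = v.2 :> nat -> u = v.
Proof. by case: u v => [a b] [c d] /= /val_inj -> /val_inj ->. Qed.

Lemma grid_adj_cases (a b : G) : grid_adj a b ->
  (a.1 = b.1 :> nat /\ (a.2.+1 = b.2 :> nat \/ b.2.+1 = a.2 :> nat)) \/
  (a.2 = b.2 :> nat /\ (a.1.+1 = b.1 :> nat \/ b.1.+1 = a.1 :> nat)).
Proof.
by case/orP => /andP [/eqP -> /orP [/eqP h | /eqP h]]; auto.
Qed.

Lemma grid_adj_sym : symmetric (@grid_adj n.+1).
Proof.
move=> a b; rewrite /grid_adj (eq_sym a.1) (eq_sym a.2).
by rewrite (orbC (_.+1 == val b.2)) (orbC (_.+1 == val b.1)).
Qed.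

Lemma grid_adj_irr : irreflexive (@grid_adj n.+1).
Proof. by move=> a; apply/negP => /grid_adj_cases; lia. Qed.

Definition diag (v : G) : nat := v.2 + n - v.1.

Lemma diag_lt (v : G) : diag v < N.
Proof. rewrite /diag; have := ltn_ord v.1; have := ltn_ord v.2; lia. Qed.

Lemma grid_adj_diag (u v : G) : grid_adj u v ->
  diag v = (diag u).+1 \/ diag u = (diag v).+1.
Proof.
move=> /grid_adj_cases uv; rewrite /diag.
have := ltn_ord u.1; have := ltn_ord v.1; lia.
Qed.

(* A staircase picks the cell of row rho k on every diagonal k; moving to
   the next diagonal either keeps the row or goes down one row. *)
Definition staircase (rho : nat -> nat) : Prop := forall k, k < N ->
  [/\ rho k <= n, n <= k + rho k, k + rho k <= 2 * n &
      (k.+1 < N -> rho k.+1 <= rho k /\ rho k <= (rho k.+1).+1)].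

Definition pt (rho : nat -> nat) (k : nat) : G :=
  (inord (rho k), inord (k + rho k - n)).

Definition below (rho : nat -> nat) : {pred G} := [pred v : G | v.1 <= rho (diag v)].

Section OneStaircase.
Variable rho : nat -> nat.
Hypothesis rho_stair : staircase rho.

Lemma ptE k : k < N ->
  (pt rho k).1 = rho k :> nat /\ (pt rho k).2 = k + rho k - n :> nat.
Proof.
move=> kN; have [r1 r2 r3 _] := rho_stair kN.
by rewrite /pt /= !inordK; lia.
Qed.

Lemma diag_pt k : k < N -> diag (pt rho k) = k.
Proof.
move=> kN; rewrite /diag; have [-> ->] := ptE kN.
have [r1 r2 r3 _] := rho_stair kN; lia.
Qed.

Lemma below_pt k : k < N -> pt rho k \in below rho.
Proof. by move=> kN; rewrite inE diag_pt // (proj1 (ptE kN)). Qed.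

Lemma pt_eq k (w : G) : k < N -> w.1 = rho k :> nat ->
  w.2 = k + rho k - n :> nat -> w = pt rho k.
Proof. move=> kN; have [p1 p2] := ptE kN; move=> *; apply: grid_val_inj; lia. Qed.

End OneStaircase.

(* The initial staircase: column 0 followed by row 0.  Its region is the
   union of row 0 and column 0, on which the diagonal is injective. *)
Definition rho0 (k : nat) : nat := n - k.

Lemma staircase0 : staircase rho0.
Proof. by move=> k kN; rewrite /rho0; split; lia. Qed.

Lemma diag_inj_below0 : {in below rho0 &, injective diag}.
Proof.
move=> u v; rewrite !inE /rho0 /diag => uD vD duv.
have := ltn_ord u.1; have := ltn_ord u.2; have := ltn_ord v.1; have := ltn_ord v.2.
move=> *; apply: grid_val_inj; lia.
Qed.

Definition flip (rho : nat -> nat) (p : nat) (k : nat) : nat :=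
  if k == p then (rho p).+1 else rho k.

(* Position p is an outer corner: the staircase turns right-then-down there,
   so the cell one row above pt rho p can be added. *)
Definition outer_corner (rho : nat -> nat) (p : nat) : Prop :=
  [/\ 0 < p, p.+1 < N, rho p.-1 = (rho p).+1 & rho p.+1 = rho p].

Section Flip.
Variables (rho : nat -> nat) (p : nat).
Hypotheses (rho_stair : staircase rho) (corner : outer_corner rho p).

Local Notation vn := (pt (flip rho p) p).

Lemma staircase_flip : staircase (flip rho p).
Proof.
have [p0 pN hm hp] := corner.
have [b1 b2 b3 _] := rho_stair (k := p.-1) ltac:(lia).
have [c1 c2 c3 _] := rho_stair pN.
move=> k kN; have [a1 a2 a3 a4] := rho_stair kN; rewrite /flip.
case: (eqVneq k p) => [-> | kp]; first by rewrite ifN_eq; [split; lia | lia].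
case: (eqVneq k.+1 p) => [k1p | k1p]; last by split.
have -> : k = p.-1 by lia.
by split; lia.
Qed.

Lemma pt_flip k : k != p -> pt (flip rho p) k = pt rho k.
Proof. by move=> kp; rewrite /pt /flip (negbTE kp). Qed.

Lemma vnE : vn.1 = (rho p).+1 :> nat /\ vn.2 = p + (rho p).+1 - n :> nat.
Proof.
have [_ pN _ _] := corner.
by have := ptE staircase_flip (ltnW pN); rewrite /flip eqxx.
Qed.

Lemma diag_vn : diag vn = p.
Proof. by have [_ pN _ _] := corner; exact: (diag_pt staircase_flip (ltnW pN)). Qed.

Lemma vn_notin_below : vn \notin below rho.
Proof. by rewrite inE diag_vn (proj1 vnE) ltnn. Qed.

Lemma below_flip : below (flip rho p) =i predU1 vn (below rho).
Proof.
have [_ pN _ _] := corner; have [vn1 vn2] := vnE.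
move=> u; rewrite [u \in predU1 _ _]inE; case: (eqVneq u vn) => [-> | uvn] /=.
  exact: (below_pt staircase_flip (ltnW pN)).
rewrite !inE /flip; case: (eqVneq (diag u) p) => [dp | //].
rewrite leq_eqVlt ltnS; case: (eqVneq (u.1 : nat) (rho p).+1) => [u1 | _] /=;
  last by rewrite /below /= dp.
case/eqP: uvn; apply: grid_val_inj; rewrite ?vn1 ?vn2 // -u1 -dp /diag.
by have := ltn_ord u.1; lia.
Qed.

Lemma below_flip_sub : {subset below rho <= below (flip rho p)}.
Proof. by move=> u uD; rewrite below_flip; apply/predU1P; right. Qed.

Lemma vn_neighbours w : w \in below rho -> grid_adj vn w ->
  w = pt rho p.-1 \/ w = pt rho p.+1.
Proof.
have [p0 pN hm hp] := corner; have [vn1 vn2] := vnE.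
move=> wD /grid_adj_cases adj; move: wD; rewrite inE => wD.
have := ltn_ord w.1; have := ltn_ord w.2; move=> *.
have [b1 b2 b3 _] := rho_stair (k := p.-1) ltac:(lia).
have [c1 c2 c3 _] := rho_stair pN.
rewrite vn1 vn2 in adj.
have [dw | dw] : diag w = p.-1 \/ diag w = p.+1 by rewrite /diag; lia.
- left; rewrite dw in wD; move: dw; rewrite /diag => dw.
  apply: pt_eq => //; lia.
- right; rewrite dw in wD; move: dw; rewrite /diag => dw.
  apply: pt_eq => //; lia.
Qed.

End Flip.

Lemma min_outside_corner rho (v : G) : staircase rho -> v \notin below rho ->
  (forall w, w \notin below rho -> v.1 + v.2 <= w.1 + w.2) ->
  outer_corner rho (diag v) /\ v.1 = (rho (diag v)).+1 :> nat.
Proof.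
move=> rho_stair; rewrite inE -ltnNge => vout vmin.
have hb1 := ltn_ord v.1; have hb2 := ltn_ord v.2.
have dv : diag v = v.2 + n - v.1 by [].
have [a1 a2 a3 a4] := rho_stair _ (diag_lt v).
have v1p : 0 < v.1 by lia.
have v2p : 0 < v.2 by lia.
pose w1 : G := (inord v.1.-1, v.2).
have w1_1 : w1.1 = v.1.-1 :> nat by rewrite /= inordK //; lia.
have dw1 : diag w1 = (diag v).+1 by rewrite /diag w1_1 /=; lia.
have : w1 \in below rho by apply/negPn/negP => /vmin; rewrite w1_1 /=; lia.
rewrite inE dw1 w1_1 => w1D.
pose w2 : G := (v.1, inord v.2.-1).
have w2_2 : w2.2 = v.2.-1 :> nat by rewrite /= inordK //; lia.
have dw2 : diag w2 = (diag v).-1 by rewrite /diag w2_2 /=; lia.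
have : w2 \in below rho by apply/negPn/negP => /vmin; rewrite w2_2 /=; lia.
rewrite inE dw2 /= => w2D.
have [b1 b2 b3 b4] := rho_stair (diag v).-1 ltac:(lia).
have := b4 ltac:(lia); have := a4 ltac:(lia).
rewrite (ltn_predK (m := 0)); last by lia.
by move=> *; split; [split|]; lia.
Qed.

End Staircase.

Arguments below : clear implicits.

Section Growth.
Variables (V : finType) (e : rel V) (n : nat).
Hypothesis e_sym : symmetric e.
Local Notation N := (2 * n.+1 - 1).
Local Notation G := ('I_n.+1 * 'I_n.+1)%type.
Variable P : {set {ffun 'I_N -> V}}.
Hypothesis P_path : forall q, q \in P -> is_path e q.
Hypothesis P_rich : forall q, q \in P -> forall i : 'I_N, 0 < i -> i.+2 <= N ->
  n.+1 ^ 2 <= #|[set y | replace_at q i y \in P]|.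

Lemma path_adj q (i j : 'I_N) : q \in P -> val j = (val i).+1 -> e (q i) (q j).
Proof.
move=> /P_path /andP [_ /forallP q_adj] ji.
by have /forallP /(_ j) /implyP := q_adj i; apply; apply/eqP.
Qed.

Fact path_size_gt0 : 0 < N. Proof. lia. Qed.

Definition pos (k : nat) : 'I_N := insubd (Ordinal path_size_gt0) k.

Lemma posE k : k < N -> val (pos k) = k.
Proof. by move=> kN; rewrite /pos val_insubd kN. Qed.

Definition path_of (rho : nat -> nat) (g : G -> V) : {ffun 'I_N -> V} :=
  [ffun k : 'I_N => g (pt n rho k)].

Definition grows (rho : nat -> nat) (g : G -> V) : Prop :=
  [/\ staircase n rho, path_of rho g \in P & embeds (@grid_adj n.+1) e (below n rho) g].

Lemma grows0 Q : Q \in P -> grows (rho0 n) (fun v => Q (pos (diag v))).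
Proof.
move=> QP; have /andP [/injectiveP Q_inj _] := P_path QP.
have stair0 : staircase n (rho0 n) := @staircase0 n.
split=> //.
- suff -> : path_of (rho0 n) (fun v => Q (pos (diag v))) = Q by [].
  apply/ffunP => k; rewrite ffunE /= (diag_pt stair0) //; congr (Q _).
  by apply: val_inj; rewrite posE.
- split=> u v uD vD.
  + move=> /Q_inj /(congr1 val); rewrite !posE ?diag_lt // => duv.
    exact: diag_inj_below0.
  + case/grid_adj_diag => duv; first by apply: path_adj; rewrite // !posE ?diag_lt.
    by rewrite e_sym; apply: path_adj; rewrite // !posE ?diag_lt.
Qed.

Lemma grows_flip rho g p : grows rho g -> outer_corner n rho p ->
  exists g', grows (flip rho p) g'.
Proof.
move=> [rho_stair pathP g_emb] corner; have [p0 pN _ _] := corner.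
set vn := pt n (flip rho p) p.
have vn_out : vn \notin below n rho := vn_notin_below rho_stair corner.
have rich : n.+1 ^ 2 <= #|[set y | replace_at (path_of rho g) (pos p) y \in P]|.
  by apply: P_rich; rewrite // posE //; lia.
have small : #|below n rho| < #|[set y | replace_at (path_of rho g) (pos p) y \in P]|.
  apply: (leq_trans _ rich).
  have -> : n.+1 ^ 2 = #|[set: G]| by rewrite cardsT card_prod card_ord mulnn.
  apply/proper_card/properP; split; first by apply/subsetP => u; rewrite inE.
  by exists vn; rewrite ?inE.
have [y yP y_fresh] := fresh_image g small; rewrite inE in yP.
pose g' v := if v == vn then y else g v.
have g'_pt k : k < N -> g' (pt n (flip rho p) k) = if k == p then y else g (pt n rho k).
  move=> kN; rewrite /g'; case: (eqVneq k p) => [-> | kp]; first by rewrite !eqxx.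
  rewrite pt_flip //; case: eqP => // pt_vn.
  by case/negP: vn_out; rewrite -pt_vn below_pt.
have path' : path_of (flip rho p) g' = replace_at (path_of rho g) (pos p) y.
  apply/ffunP => k; rewrite /replace_at !ffunE g'_pt //.
  by have -> : (k == pos p) = (val k == p) by rewrite -(inj_eq val_inj) posE //; lia.
set q := path_of (flip rho p) g'.
have qP : q \in P by rewrite /q path'.
have q_p : q (pos p) = y by rewrite ffunE posE ?g'_pt ?eqxx //; lia.
have q_ne k : k < N -> k != p -> q (pos k) = g (pt n rho k).
  by move=> kN kp; rewrite ffunE posE // g'_pt // (negbTE kp).
have q_adj i : i.+1 < N -> e (q (pos i)) (q (pos i.+1)).
  by move=> iN; apply: path_adj qP _; rewrite !posE //; lia.
have y_adj i : i = p.-1 \/ i = p.+1 -> e y (g (pt n rho i)).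
  case=> ->.
  - have := q_adj p.-1 ltac:(lia); rewrite (ltn_predK p0) q_p e_sym q_ne //; lia.
  - by have := q_adj p pN; rewrite q_p q_ne //; lia.
exists g'; split; rewrite ?path' //; first exact: staircase_flip.
apply: embeds_eq (fun u => esym (below_flip rho_stair corner u)) _.
rewrite /g'; apply: (embeds_extend (@grid_adj_sym n) (@grid_adj_irr n) e_sym g_emb vn_out y_fresh).
by move=> w wD /(vn_neighbours rho_stair corner wD) [] ->; apply: y_adj; [left|right].
Qed.

Lemma grows_grid rho g : grows rho g -> contains_grid e n.+1.
Proof.
move=> grows_rg; have [m] := ubnP #|[predC below n rho]|.
elim: m => // m IH in rho g grows_rg *; rewrite ltnS => out_le.
have [rho_stair _ g_emb] := grows_rg.
case: (pickP [predC below n rho]) => [v0 v0_out | all_in]; last first.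
  exists g; apply: embeds_total g_emb => u.
  by have := all_in u; rewrite inE => /negbFE.
have [v v_out v_min] := arg_minnP (fun v : G => v.1 + v.2) v0_out.
have [corner v1] := min_outside_corner rho_stair v_out v_min.
have [g' grows'] := grows_flip grows_rg corner.
apply: IH grows' _; apply: leq_trans out_le; apply/proper_card/properP; split.
  by apply/subsetP => u; rewrite !inE; apply: contra; apply: below_flip_sub.
by exists v; rewrite // !inE negbK /flip eqxx v1.
Qed.

End Growth.

Theorem proposition3p3 (R : realFieldType) (V : finType) (e : rel V) (t : nat)
  (alpha : R) (P : {set {ffun 'I_(2 * t - 1) -> V}}) :
  simple_graph e -> 1 <= t -> (0 < alpha)%R ->
  P != set0 -> alpha_rich e P alpha ->
  ((t ^ 2)%:R <= alpha)%R ->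
  contains_grid e t.
Proof.
move=> [e_sym _] t_gt0 _ /set0Pn [Q QP] [P_path P_rich] t2_le.
case: t t_gt0 => [// | n _] in P Q QP P_path P_rich t2_le *.
have P_rich_nat q : q \in P -> forall i : 'I_(2 * n.+1 - 1), 0 < i ->
    i.+2 <= 2 * n.+1 - 1 -> n.+1 ^ 2 <= #|[set y | replace_at q i y \in P]|.
  move=> qP i i_gt0 iN; rewrite -(ler_nat R).
  exact: le_trans t2_le (P_rich q qP i i_gt0 iN).
apply: (grows_grid e_sym P_path P_rich_nat).
exact: (grows0 e_sym P_path QP).
Qed.
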